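(* For every graph $G=(V,E)$, $$\mathcal{T}(G)=\{x\in\mathbb{R}^V : \exists y\in\mathbb{R}^E \text{ such that } y(\delta(v))\le x_v\ \forall v\in V,\ y_e\ge 0\ \forall e\in E,\ x_u+x_v-y_{uv}\le 1\ \forall uv\in E\}.$$
   Context: $\delta(v)$ is the set of edges incident to $v$, $N(w)$ the neighborhood of $w$, $x(A)=\sum_{a\in A}x_a$. $\mathcal{T}(G)$ is the polytope of $x\in\mathbb{R}^V$ satisfying $0\le x\le 1$ and the star inequalities $x(W)+(|W|-1)x_w\le|W|$ for all $w\in V$ and $W\subseteq N(w)$. *)

From HB Require Import structures.
From mathcomp Require Import all_boot all_order all_algebra.
From mathcomp Require Import reals.
Set Implicit Arguments. Unset Strict Implicit. Unset Printing Implicit Defensive.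
Import Order.TTheory GRing.Theory Num.Theory.
Local Open Scope ring_scope.

(* A finite simple graph G = (V, E) is given by a finite vertex type V and a
   symmetric irreflexive adjacency relation [adj]. *)
Section Graph.
Variable V : finType.
Variable adj : rel V.

Definition edgeset : {set {set V}} :=
  [set A : {set V} | [exists u, exists v, adj u v && (A == [set u; v])]].

Definition delta (v : V) : {set {set V}} := [set A in edgeset | v \in A].

Definition nbhd (w : V) : {set V} := [set u | adj w u].

Variable R : realType.

Definition in_T (x : V -> R) : Prop :=
  (forall v, 0 <= x v <= 1) /\
  (forall (w : V) (W : {set V}), W \subset nbhd w ->
     \sum_(u in W) x u + (#|W|%:R - 1) * x w <= #|W|%:R).

(* x is in the projection of the extended formulation; y ranges over R^E
   (represented as a function on 2-sets, only its values on edges matter). *)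
Definition in_ext (x : V -> R) : Prop :=
  (forall v, x v <= 1) /\
  exists y : {set V} -> R,
    (forall v, \sum_(A in delta v) y A <= x v) /\
    (forall A, A \in edgeset -> 0 <= y A) /\
    (forall u v, adj u v -> x u + x v - y [set u; v] <= 1).
End Graph.

From HB Require Import structures.
From mathcomp Require Import all_boot all_order all_algebra.
From mathcomp Require Import reals.
From mathcomp Require Import ring lra.
Import Order.TTheory GRing.Theory Num.Theory.
Set Implicit Arguments. Unset Strict Implicit. Unset Printing Implicit Defensive.
Local Open Scope ring_scope.

(* The star inequality for (w, W) says exactly that the excesses
   x_w + x_u - 1, u in W, sum to at most x_w.  Given y, the edge constraints
   bound each excess by y_wu, so y(delta(w)) <= x_w yields every star
   inequality.  Conversely, y_uv := max(0, x_u + x_v - 1) is feasible: its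
   sum over delta(v) is the total excess over the set W of neighbours with
   positive excess, and the star inequality for (v, W) bounds it by x_v. *)

Lemma sumr_max0 (R : realDomainType) (I : finType) (A : {pred I}) (F : I -> R) :
  \sum_(i in A) Num.max 0 (F i) = \sum_(i in A | 0 < F i) F i.
Proof.
rewrite (bigID (fun i => 0 < F i)) /= [X in _ + X]big1 ?addr0.
  by apply: eq_bigr => i /andP [_ /ltW /max_idPr].
by move=> i /andP [_]; rewrite -leNgt => /max_idPl.
Qed.

Lemma star_ineq_excessE (R : realFieldType) (I : finType) (W : {set I})
    (x : I -> R) (w : I) :
  (\sum_(u in W) x u + (#|W|%:R - 1) * x w <= #|W|%:R) =
  (\sum_(u in W) (x w + x u - 1) <= x w).
Proof.
rewrite !big_split /= sumrN !sumr_const -[x w *+ _]mulr_natr -[1 *+ _]mulr_natr.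
by rewrite -subr_ge0 -[RHS]subr_ge0; congr (0 <= _); ring.
Qed.

Lemma big_set2 (R : nmodType) (I : finType) (F : I -> R) (u v : I) :
  u != v -> \sum_(i in [set u; v]) F i = F u + F v.
Proof. by move=> neq_uv; rewrite big_setU1 ?big_set1 // inE. Qed.

Section StarPolytope.

Variables (V : finType) (adj : rel V).
Hypotheses (adj_sym : symmetric adj) (adj_irr : irreflexive adj).

Lemma adj_neq u v : adj u v -> u != v.
Proof. by apply: contraTneq => ->; rewrite adj_irr. Qed.

Lemma edge_set2 u v : adj u v -> [set u; v] \in edgeset adj.
Proof.
by move=> huv; rewrite inE; apply/existsP; exists u; apply/existsP; exists v; rewrite huv /=.
Qed.

Lemma deltaE v : delta adj v = [set [set v; u] | u in nbhd adj v].
Proof.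
apply/setP => A; rewrite inE; apply/idP/imsetP.
- rewrite inE; case/andP => /existsP [a /existsP [b /andP [hab /eqP ->]]].
  rewrite !inE => /orP [] /eqP ->; first by exists b; rewrite ?inE.
  by exists a; [rewrite inE adj_sym | rewrite setUC].
- case=> u; rewrite inE => hvu ->.
  by rewrite edge_set2 // !inE eqxx.
Qed.

Lemma sum_delta (R : nmodType) (F : {set V} -> R) v :
  \sum_(A in delta adj v) F A = \sum_(u in nbhd adj v) F [set v; u].
Proof.
rewrite deltaE big_imset // => u1 u2; rewrite !inE => hu1 _ eq12.
have : u1 \in [set v; u2] by rewrite -eq12 !inE eqxx orbT.
by rewrite !inE eq_sym (negbTE (adj_neq hu1)) => /eqP.
Qed.

Variable R : realType.

Lemma in_T_in_ext (x : V -> R) : in_T adj x -> in_ext adj x.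
Proof.
case=> x01 star; split=> [v|]; first by case/andP: (x01 v).
exists (fun A : {set V} => Num.max 0 (\sum_(w in A) x w - 1)); split; [|split].
- move=> v; rewrite sum_delta.
  rewrite (eq_bigr (fun u => Num.max 0 (x v + x u - 1))); last first.
    by move=> u; rewrite inE => /adj_neq neq_vu; rewrite big_set2.
  set W := [set u in nbhd adj v | 0 < x v + x u - 1].
  have sub_W : W \subset nbhd adj v by apply/subsetP => u; rewrite inE => /andP [].
  have := star v W sub_W; rewrite star_ineq_excessE sumr_max0.
  by rewrite [X in _ -> X <= _](eq_bigl (mem W)) // => u; rewrite !inE.
- by move=> A _; rewrite le_max lexx.
- move=> u v huv; rewrite big_set2 ?adj_neq //.
  have : x u + x v - 1 <= Num.max 0 (x u + x v - 1) by rewrite le_max lexx orbT.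
  lra.
Qed.

Lemma in_ext_in_T (x : V -> R) : in_ext adj x -> in_T adj x.
Proof.
case=> x_le1 [y [y_delta [y_ge0 y_edge]]].
have x_ge0 v : 0 <= x v.
  apply: le_trans (y_delta v); apply: sumr_ge0 => A.
  by rewrite inE => /andP [/y_ge0].
split=> [v|w W sub_W]; first by rewrite x_ge0 x_le1.
rewrite star_ineq_excessE.
apply: (@le_trans _ _ (\sum_(u in W) y [set w; u])).
  apply: ler_sum => u /(subsetP sub_W); rewrite inE => hwu.
  by have := y_edge _ _ hwu; lra.
apply: le_trans (y_delta w); rewrite sum_delta [leRHS](big_setID W) /=.
rewrite (setIidPr sub_W) lerDl; apply: sumr_ge0 => u; rewrite !inE => /andP [_ hwu].
exact/y_ge0/edge_set2.
Qed.

End StarPolytope.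

Theorem mainTheorem9 (V : finType) (adj : rel V) (R : realType)
  (adj_sym : symmetric adj) (adj_irr : irreflexive adj) (x : V -> R) :
  in_T adj x <-> in_ext adj x.
Proof.
by split; [apply: in_T_in_ext | apply: in_ext_in_T].
Qed.
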